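(* Let $k$ be an algebraically closed field of characteristic zero and let $X$ be a smooth affine $k$-variety. Then $\mathcal{O}_{ch}(X)=\mathcal{O}_{ch}(X\times_k\mathbb{A}^1_k)$ as $k$-subalgebras of $\mathcal{O}(X\times_k\mathbb{A}^1_k)$, where $\mathcal{O}(X)$ is identified with a subalgebra via pullback along the projection $X\times_k\mathbb{A}^1_k\to X$.
   Context: For an affine $k$-variety $Z$ and a $k$-morphism $g:\mathbb{A}^1_k\to Z$, $\mathcal{O}_{ch,g}(Z)=\{f\in\mathcal{O}(Z): f\circ g\text{ is constant}\}$, and $\mathcal{O}_{ch}(Z)=\bigcap_g\mathcal{O}_{ch,g}(Z)$ over all $k$-morphisms $g:\mathbb{A}^1_k\to Z$. *)

From HB Require Import structures.
From mathcomp Require Import all_boot all_algebra.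
From mathcomp Require Import mpoly.
Set Implicit Arguments. Unset Strict Implicit. Unset Printing Implicit Defensive.
Import GRing.Theory.
Local Open Scope ring_scope.

(* Classical (point-set) affine algebraic geometry over an algebraically
   closed field k: an affine k-variety is a Zariski-closed subset of k^n,
   its regular functions are represented by polynomials (two polynomials
   give the same regular function iff they agree on all points). *)
Section AffGeom.
Variable k : closedFieldType.

Definition pt (n : nat) := 'I_n -> k.

Definition zero_set n (S : seq {mpoly k[n]}) : pt n -> Prop :=
  fun x => forall p, p \in S -> p.@[x] = 0.

Definition zclosed n (Z : pt n -> Prop) : Prop :=
  exists S : seq {mpoly k[n]}, forall x, Z x <-> zero_set S x.

Definition psubset n (Z W : pt n -> Prop) := forall x, Z x -> W x.
Definition pstrict n (Z W : pt n -> Prop) :=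
  psubset Z W /\ exists x, W x /\ ~ Z x.

Definition zirreducible n (Z : pt n -> Prop) : Prop :=
  zclosed Z /\ (exists x, Z x) /\
  forall Z1 Z2 : pt n -> Prop, zclosed Z1 -> zclosed Z2 ->
    (forall x, Z x -> Z1 x \/ Z2 x) -> psubset Z Z1 \/ psubset Z Z2.

Definition chain_at n (X : pt n -> Prop) (x : pt n) (m : nat) : Prop :=
  exists Zs : nat -> (pt n -> Prop),
    (forall i, (i <= m)%N -> zirreducible (Zs i) /\ psubset (Zs i) X) /\
    Zs 0%N x /\ (forall i, (i < m)%N -> pstrict (Zs i) (Zs i.+1)).

Definition local_dim n (X : pt n -> Prop) (x : pt n) (d : nat) : Prop :=
  chain_at X x d /\ ~ chain_at X x d.+1.

Definition vanishes n (X : pt n -> Prop) (p : {mpoly k[n]}) : Prop :=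
  forall x, X x -> p.@[x] = 0.

Definition tangent_vec n (X : pt n -> Prop) (x : pt n) (v : 'rV[k]_n) : Prop :=
  forall p, vanishes X p -> \sum_(i < n) (p^`M(i)).@[x] * v 0 i = 0.

(* dim_k T_x X = d : T_x X has a basis given by the rows of a d x n matrix *)
Definition tangent_dim n (X : pt n -> Prop) (x : pt n) (d : nat) : Prop :=
  exists M : 'M[k]_(d, n),
    (forall j, tangent_vec X x (row j M)) /\ \rank M = d /\
    (forall v, tangent_vec X x v -> (v <= M)%MS).

Definition smooth_at n (X : pt n -> Prop) (x : pt n) : Prop :=
  exists d, local_dim X x d /\ tangent_dim X x d.

Definition smooth n (X : pt n -> Prop) : Prop := forall x, X x -> smooth_at X x.

(* k-morphisms A^1 -> Z, given by polynomial coordinates *)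
Definition curve_eval n (g : 'I_n -> {poly k}) (t : k) : pt n := fun i => (g i).[t].

Definition curve_in n (Z : pt n -> Prop) (g : 'I_n -> {poly k}) : Prop :=
  forall t, Z (curve_eval g t).

Definition Och n (Z : pt n -> Prop) (f : {mpoly k[n]}) : Prop :=
  forall g, curve_in Z g -> exists c : k, forall t, f.@[curve_eval g t] = c.

Definition proj1A n (y : pt n.+1) : pt n := fun i => y (widen_ord (leqnSn n) i).

Definition prodA1 n (X : pt n -> Prop) : pt n.+1 -> Prop := fun y => X (proj1A y).

End AffGeom.

(* Fibres {x} x A^1 and the zero section x |-> (x, 0) are curves in X x A^1,
   so a function constant on all curves of X x A^1 does not depend on the
   last coordinate and equals the pullback of its restriction to X x {0};
   that restriction is constant on curves of X because every curve g of X
   lifts to the curve (g, 0).  Conversely, curves of X x A^1 project to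
   curves of X.  Neither smoothness nor the characteristic plays a role. *)
From HB Require Import structures.
From mathcomp Require Import all_boot all_algebra.
From mathcomp Require Import mpoly.
Set Implicit Arguments. Unset Strict Implicit. Unset Printing Implicit Defensive.
Import GRing.Theory.
Local Open Scope ring_scope.

Section ExtendLast.
Variables (T : Type) (n : nat).

Definition extend (f : 'I_n -> T) (a : T) : 'I_n.+1 -> T :=
  fun i => if unlift ord_max i is Some j then f j else a.

Lemma lift_max_widen (j : 'I_n) : lift ord_max j = widen_ord (leqnSn n) j.
Proof. exact/val_inj/lift_max. Qed.

Lemma extend_widen f a j : extend f a (widen_ord (leqnSn n) j) = f j.
Proof. by rewrite /extend -lift_max_widen liftK. Qed.

Lemma extend_max f a : extend f a ord_max = a.
Proof. by rewrite /extend unlift_none. Qed.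

Lemma extendK (y : 'I_n.+1 -> T) :
  y =1 extend (fun j => y (widen_ord (leqnSn n) j)) (y ord_max).
Proof.
by move=> i; case: (unliftP ord_max i) => [j ->|->];
  rewrite ?extend_max // lift_max_widen extend_widen.
Qed.

End ExtendLast.

Section ChainConstantProduct.
Variables (k : closedFieldType) (n : nat) (Z : pt k n -> Prop).
Hypothesis Z_ext : forall x y, x =1 y -> Z x -> Z y.

Lemma curve_eval_extend (g : 'I_n -> {poly k}) (c : {poly k}) t :
  curve_eval (extend g c) t =1 extend (curve_eval g t) c.[t].
Proof. by move=> i; rewrite /curve_eval /extend; case: unlift. Qed.

Lemma curve_in_prodA1_extend g c :
  curve_in Z g -> curve_in (prodA1 Z) (extend g c).
Proof.
move=> Zg t; apply: Z_ext (Zg t) => j.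
by rewrite /proj1A curve_eval_extend extend_widen.
Qed.

Lemma Och_prodA1_fibre_const q x s t : Och (prodA1 Z) q -> Z x ->
  q.@[extend x s] = q.@[extend x t].
Proof.
move=> Chq Zx.
have Zg : curve_in Z (fun j => (x j)%:P).
  by move=> u; apply: Z_ext Zx => j; rewrite /curve_eval /= hornerC.
have [c Cc] := Chq _ (curve_in_prodA1_extend 'X Zg).
have fibre u : curve_eval (extend (fun j => (x j)%:P) 'X) u =1 extend x u.
  move=> i; rewrite curve_eval_extend hornerX /extend /curve_eval.
  by case: unlift => // j; rewrite hornerC.
by rewrite -(meval_eq q (fibre s)) -(meval_eq q (fibre t)) !Cc.
Qed.

Definition slice_last (a : k) (q : {mpoly k[n.+1]}) : {mpoly k[n]} :=
  q \mPo [tuple extend (fun j => 'X_j) a%:MP i | i < n.+1].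

Lemma meval_slice_last a q x : (slice_last a q).@[x] = q.@[extend x a].
Proof.
rewrite comp_mpoly_meval; apply: meval_eq => i.
by rewrite tnth_map tnth_ord_tuple /extend; case: unlift => [j|];
  rewrite ?mevalXU ?mevalC.
Qed.

Lemma Och_slice_last q a : Och (prodA1 Z) q -> Och Z (slice_last a q).
Proof.
move=> Chq g Zg; have [c Cc] := Chq _ (curve_in_prodA1_extend a%:P Zg).
exists c => t; rewrite meval_slice_last -(Cc t).
by apply: meval_eq => i; rewrite curve_eval_extend hornerC.
Qed.

Lemma Och_prodA1_pullback q p : Och Z p ->
  (forall y, prodA1 Z y -> q.@[y] = p.@[proj1A y]) -> Och (prodA1 Z) q.
Proof.
move=> Chp qE G ZG; have [c Cc] := Chp _ ZG.
by exists c => t; rewrite qE //; apply: Cc.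
Qed.

Lemma Och_prodA1_slice q y : Och (prodA1 Z) q -> prodA1 Z y ->
  q.@[y] = (slice_last 0 q).@[proj1A y].
Proof.
move=> Chq Zy; rewrite meval_slice_last (meval_eq q (extendK y)).
exact: Och_prodA1_fibre_const.
Qed.

End ChainConstantProduct.

Lemma zero_set_ext (k : closedFieldType) n (S : seq {mpoly k[n]}) x y :
  x =1 y -> zero_set S x -> zero_set S y.
Proof. by move=> xy Sx p Sp; rewrite -(meval_eq p xy); apply: Sx. Qed.

Theorem proposition6p11 (k : closedFieldType) (hchar : [pchar k] =i pred0)
  (n : nat) (S : seq {mpoly k[n]}) (hX : smooth (zero_set S)) :
  forall q : {mpoly k[n.+1]},
    Och (prodA1 (zero_set S)) q <->
    exists p : {mpoly k[n]}, Och (zero_set S) p /\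
      (forall y, prodA1 (zero_set S) y -> q.@[y] = p.@[proj1A y]).
Proof.
have X_ext := @zero_set_ext k n S.
move=> q; split=> [Chq | [p [Chp qE]]]; last exact: Och_prodA1_pullback qE.
exists (slice_last 0 q); split; first exact: Och_slice_last X_ext _ _ Chq.
by move=> y; apply: Och_prodA1_slice X_ext _ _ Chq.
Qed.
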